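(* Let $F$ be a global function field with full constant field $k=\mathbb{F}_q$, let $x\in F$ be transcendental over $k$ with $n=[F:k(x)]$ and $\gcd(n,q)=1$, and let $S=\{P_1,\dots,P_{|S|}\}$ be a finite set of places of $F$ containing all infinite places of $F/k(x)$. Let $M_S\in\mathbb{Z}^{(|S|-1)\times|S|}$ be an integer matrix whose rows form an LLL-reduced basis of the $S$-unit valuation lattice $\Lambda_S'$ (this is the output of the paper's algorithm SValMat on input $S$). Then \[ \|M_S\|_\infty:=\max_{i,j}|(M_S)_{ij}| \le 2^{(|S|-1)(|S|-2)/4}\,R_S'. \]
   Context: The infinite places of $F/k(x)$ are the poles of $x$. For a finite set $S$ of places containing all infinite places, $O_S^\times$ denotes the group of $S$-units of $F$ (elements whose divisor is supported on $S$). With a fixed ordering $P_1,\dots,P_{|S|}$ of $S$, let $\phi_S:F^\times\to\mathbb{Z}^{|S|}$, $\alpha\mapsto(-v_{P_1}(\alpha),\dots,-v_{P_{|S|}}(\alpha))$, where $v_P$ is the normalized discrete valuation at $P$. The $S$-unit valuation lattice is $\Lambda_S'=\phi_S(O_S^\times)$, a lattice of rank $|S|-1$ in $\mathbb{Z}^{|S|}$, and $R_S'=\det\Lambda_S'$ is its determinant (covolume). LLL-reduced is meant in the sense of Lenstra–Lenstra–Lovász. *)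

From HB Require Import structures.
From mathcomp Require Import all_boot all_order all_algebra.
From mathcomp Require Import reals exp.
Set Implicit Arguments. Unset Strict Implicit. Unset Printing Implicit Defensive.
Import Order.TTheory GRing.Theory Num.Theory.
Local Open Scope ring_scope.

Section FunctionField.
Variable F : fieldType.

Definition is_subfield (k : {pred F}) : Prop :=
  [/\ 0 \in k, 1 \in k,
      forall a b, a \in k -> b \in k -> a - b \in k,
      forall a b, a \in k -> b \in k -> a * b \in k
    & forall a, a \in k -> a^-1 \in k].

Definition has_card (k : {pred F}) (q : nat) : Prop :=
  exists s : seq F, [/\ uniq s, size s = q & k =i s].

Definition poly_over (k : {pred F}) (p : {poly F}) : Prop :=
  forall i, p`_i \in k.

Definition algebraic_over (k : {pred F}) (a : F) : Prop :=
  exists p : {poly F}, [/\ poly_over k p, p != 0 & root p a].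

Definition full_constant_field (k : {pred F}) : Prop :=
  forall a, algebraic_over k a -> a \in k.

Definition transcendental_over (k : {pred F}) (x : F) : Prop :=
  ~ algebraic_over k x.

Definition in_kx (k : {pred F}) (x y : F) : Prop :=
  exists p r : {poly F},
    [/\ poly_over k p, poly_over k r, r.[x] != 0 & y = p.[x] / r.[x]].

Definition ext_degree_kx (k : {pred F}) (x : F) (n : nat) : Prop :=
  exists b : 'I_n -> F,
    (forall y, exists c : 'I_n -> F,
        (forall i, in_kx k x (c i)) /\ y = \sum_(i < n) c i * b i) /\
    (forall c : 'I_n -> F, (forall i, in_kx k x (c i)) ->
        \sum_(i < n) c i * b i = 0 -> forall i, c i = 0).

(* A place P of F/k, represented by its normalized discrete valuation v_P
   (restricted to F^x; by convention v 0 = 0, so that places and their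
   valuations correspond bijectively). *)
Definition is_place (k : {pred F}) (v : F -> int) : Prop :=
  [/\ v 0 = 0,
      forall a b, a != 0 -> b != 0 -> v (a * b) = v a + v b,
      forall a b, a != 0 -> b != 0 -> a + b != 0 ->
        Num.min (v a) (v b) <= v (a + b),
      exists t, t != 0 /\ v t = 1
    & forall c, c \in k -> c != 0 -> v c = 0].

Definition infinite_place (k : {pred F}) (x : F) (v : F -> int) : Prop :=
  is_place k v /\ v x < 0.

Definition S_unit (k : {pred F}) (s : nat) (S : 'I_s -> F -> int) (a : F) : Prop :=
  a != 0 /\ forall v, is_place k v -> (forall i, v <> S i) -> v a = 0.

Definition phiS (s : nat) (S : 'I_s -> F -> int) (a : F) : 'rV[int]_s :=
  \row_(i < s) - S i a.

Definition S_val_lattice (k : {pred F}) (s : nat) (S : 'I_s -> F -> int)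
  (w : 'rV[int]_s) : Prop :=
  exists a, S_unit k S a /\ w = phiS S a.
End FunctionField.

Definition is_lattice_basis (r m : nat) (L : 'rV[int]_m -> Prop)
  (B : 'M[int]_(r, m)) : Prop :=
  [/\ forall i, L (row i B),
      forall w, L w -> exists c : 'rV[int]_r, w = c *m B
    & forall c : 'rV[int]_r, c *m B = 0 -> c = 0].

Section LLL.
Variable R : realType.

Definition dotr (m : nat) (u v : 'rV[R]_m) : R := (u *m v^T) 0 0.

Definition gs_step (m : nat) (gs : seq 'rV[R]_m) (b : 'rV[R]_m) :=
  rcons gs (b - \sum_(g <- gs) (dotr b g / dotr g g) *: g).
Definition gram_schmidt (m : nat) (bs : seq 'rV[R]_m) : seq 'rV[R]_m :=
  foldl (@gs_step m) [::] bs.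

Definition rows_real (r m : nat) (B : 'M[int]_(r, m)) : seq 'rV[R]_m :=
  [seq row i (map_mx (fun z : int => z%:~R) B) | i <- enum 'I_r].

Definition LLL_reduced (r m : nat) (B : 'M[int]_(r, m)) : Prop :=
  let bs := rows_real B in
  let gs := gram_schmidt bs in
  let b i := nth 0 bs i in
  let g i := nth 0 gs i in
  let mu i j := dotr (b i) (g j) / dotr (g j) (g j) in
  (forall i j : nat, (j < i < r)%N -> `|mu i j| <= 1 / 2) /\
  (forall i : nat, (0 < i < r)%N ->
     (3 / 4 - (mu i i.-1) ^+ 2) * dotr (g i.-1) (g i.-1) <= dotr (g i) (g i)).

Definition lattice_det (r m : nat) (B : 'M[int]_(r, m)) : R :=
  let Br := map_mx (fun z : int => z%:~R : R) B in
  Num.sqrt (\det (Br *m Br^T)).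
End LLL.

Definition mx_inf_norm (r m : nat) (B : 'M[int]_(r, m)) : int :=
  \big[Num.max/0]_(i < r) \big[Num.max/0]_(j < m) `|B i j|.

From HB Require Import structures.
From mathcomp Require Import all_boot all_order all_algebra.
From mathcomp Require Import reals exp.
From mathcomp Require Import lra.
Set Implicit Arguments.
Unset Strict Implicit.
Import Order.TTheory GRing.Theory Num.Theory.
Local Open Scope ring_scope.

(* Write [b_i] for the rows of [M], [g_i] for their Gram-Schmidt vectors and
   [N_i = |g_i|^2].  The Gram matrix factors as [B B^T = L diag(N) L^T] with [L]
   unitriangular, so [det (B B^T) = prod_i N_i], while [|b_i|^2 <= 2^i N_i] for
   an LLL-reduced basis because the Lovasz condition gives [N_(i-1) <= 2 N_i].
   Since the rows are nonzero integer vectors, [|b_i|^2 >= 1], hence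
   [M_ij^2 <= |b_i|^2 <= prod_k |b_k|^2 <= 2^(r(r-1)/2) det (B B^T)] with
   [r = |S| - 1]; taking square roots gives the bound. *)

Section InnerProduct.
Variables (R : realType) (m : nat).
Implicit Types (u v w : 'rV[R]_m).

Lemma dotrE u v : dotr u v = \sum_k u 0 k * v 0 k.
Proof. by rewrite /dotr mxE; apply: eq_bigr => k _; rewrite mxE. Qed.

Lemma dotrC u v : dotr u v = dotr v u.
Proof. by rewrite !dotrE; apply: eq_bigr => k _; rewrite mulrC. Qed.

Lemma dotrBl u v w : dotr (u - v) w = dotr u w - dotr v w.
Proof. by rewrite /dotr mulmxBl !mxE. Qed.

Lemma dotrZl a u w : dotr (a *: u) w = a * dotr u w.
Proof. by rewrite /dotr -scalemxAl !mxE. Qed.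

Lemma dotr_suml (I : Type) (s : seq I) (P : pred I) (F : I -> 'rV[R]_m) w :
  dotr (\sum_(i <- s | P i) F i) w = \sum_(i <- s | P i) dotr (F i) w.
Proof. by rewrite /dotr mulmx_suml summxE. Qed.

Lemma dotr0r u : dotr u 0 = 0.
Proof. by rewrite /dotr trmx0 mulmx0 mxE. Qed.

Lemma dotrr_ge0 u : 0 <= dotr u u.
Proof. by rewrite dotrE; apply: sumr_ge0 => k _; rewrite -expr2 sqr_ge0. Qed.

Lemma dotrr_eq0 u : dotr u u = 0 -> u = 0.
Proof.
rewrite dotrE => /eqP; rewrite psumr_eq0 => [/allP u0|k _]; last first.
  by rewrite -expr2 sqr_ge0.
apply/rowP => k; have /implyP := u0 k (mem_index_enum _).
by rewrite mulf_eq0 orbb mxE => /(_ isT) /eqP.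
Qed.

End InnerProduct.

Section GramSchmidt.
Variables (R : realType) (m : nat).
Implicit Types (b : 'rV[R]_m) (bs gs : seq 'rV[R]_m).

Lemma gram_schmidt_rcons bs b :
  gram_schmidt (rcons bs b) =
  rcons (gram_schmidt bs)
    (b - \sum_(g <- gram_schmidt bs) (dotr b g / dotr g g) *: g).
Proof. by rewrite /gram_schmidt foldl_rcons. Qed.

Lemma size_gram_schmidt bs : size (gram_schmidt bs) = size bs.
Proof.
by elim/last_ind: bs => [//|bs b IH]; rewrite gram_schmidt_rcons !size_rcons IH.
Qed.

Lemma gs_residual_orth gs b j :
  (forall i j, (i < size gs)%N -> (j < size gs)%N -> i != j ->
     dotr (nth 0 gs i) (nth 0 gs j) = 0) ->
  (j < size gs)%N ->
  dotr (b - \sum_(g <- gs) (dotr b g / dotr g g) *: g) (nth 0 gs j) = 0.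
Proof.
move=> orth_gs lt_j; set gj := nth 0 gs j.
rewrite dotrBl dotr_suml (big_nth 0) big_mkord (bigD1 (Ordinal lt_j)) //=.
rewrite big1 ?addr0 => [|i neq_ij]; last by rewrite dotrZl (orth_gs i j) ?mulr0.
rewrite dotrZl; have [/dotrr_eq0 ->|nz_gj] := eqVneq (dotr gj gj) 0.
  by rewrite !dotr0r mulr0 subr0.
by rewrite mulfVK // subrr.
Qed.

Definition gso bs i := nth 0 (gram_schmidt bs) i.

Definition gso_coef bs i j :=
  dotr (nth 0 bs i) (gso bs j) / dotr (gso bs j) (gso bs j).

Lemma gso_orth bs i j :
  (i < size bs)%N -> (j < size bs)%N -> i != j ->
  dotr (gso bs i) (gso bs j) = 0.
Proof.
rewrite /gso; elim/last_ind: bs i j => [//|bs b IH] i j.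
have orth_gs : forall i j, (i < size (gram_schmidt bs))%N ->
    (j < size (gram_schmidt bs))%N -> i != j ->
    dotr (nth 0 (gram_schmidt bs) i) (nth 0 (gram_schmidt bs) j) = 0.
  by rewrite size_gram_schmidt; exact: IH.
have orth_new j' : (j' < size bs)%N -> dotr (b - \sum_(g <- gram_schmidt bs)
    (dotr b g / dotr g g) *: g) (nth 0 (gram_schmidt bs) j') = 0.
  by rewrite -(size_gram_schmidt bs); apply: gs_residual_orth.
rewrite gram_schmidt_rcons size_rcons !nth_rcons size_gram_schmidt !ltnS.
rewrite [(i <= _)%N]leq_eqVlt [(j <= _)%N]leq_eqVlt.
move=> /predU1P[-> | lt_i] /predU1P[-> | lt_j];
  rewrite ?eqxx ?ltnn ?lt_i ?lt_j //.
- by move=> _; apply: orth_new.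
- by move=> _; rewrite dotrC; apply: orth_new.
- exact: IH.
Qed.

Lemma gso_decomp bs i : (i < size bs)%N ->
  nth 0 bs i = gso bs i + \sum_(j < i) gso_coef bs i j *: gso bs j.
Proof.
rewrite /gso_coef /gso; elim/last_ind: bs i => [//|bs b IH] i.
rewrite size_rcons ltnS leq_eqVlt gram_schmidt_rcons => /predU1P[-> | lt_i].
  rewrite !nth_rcons size_gram_schmidt ltnn eqxx (big_nth 0) big_mkord.
  rewrite size_gram_schmidt.
  under [X in _ = _ + X]eq_bigr => j _ do
    rewrite !nth_rcons size_gram_schmidt ltn_ord.
  by rewrite subrK.
rewrite !nth_rcons size_gram_schmidt lt_i {1}(IH _ lt_i); congr (_ + _).
apply: eq_bigr => j _.
by rewrite !nth_rcons size_gram_schmidt (ltn_trans (ltn_ord j) lt_i).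
Qed.

End GramSchmidt.

Section GramMatrix.
Variables (R : realType) (r m : nat) (B : 'M[R]_(r, m)).

Definition rows_of := [seq row i B | i <- enum 'I_r].

Local Notation g i := (gso rows_of i).
Local Notation N i := (dotr (g i) (g i)).
Local Notation mu i j := (gso_coef rows_of i j).

Lemma size_rows_of : size rows_of = r.
Proof. by rewrite size_map size_enum_ord. Qed.

Lemma nth_rows_of (i : 'I_r) : nth 0 rows_of i = row i B.
Proof. by rewrite (nth_map i) ?size_enum_ord // nth_ord_enum. Qed.

Let L : 'M[R]_r := \matrix_(i, j) if (j < i)%N then mu i j else (j == i)%:R.
Let G : 'M[R]_(r, m) := \matrix_(i, k) g i 0 k.

Lemma gso_mx_factor : B = L *m G.
Proof.
apply/row_matrixP => i; rewrite row_mul mulmx_sum_row -nth_rows_of.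
rewrite gso_decomp ?size_rows_of //.
rewrite (big_ord_widen r (fun j => mu i j *: g j)) 1?ltnW //.
rewrite big_mkcond (bigD1 i) //= ltnn add0r [in RHS](bigD1 i) //=.
congr (_ + _).
  by rewrite !mxE ltnn eqxx scale1r; apply/rowP => k; rewrite !mxE.
apply: eq_big => // j neq_ji; rewrite !mxE.
case: ifP => _; last by rewrite (negbTE neq_ji) scale0r.
by congr (_ *: _); apply/rowP => k; rewrite !mxE.
Qed.

Lemma gso_mx_gram_diag : G *m G^T = diag_mx (\row_i N i).
Proof.
apply/matrixP => i j; rewrite !mxE.
have -> : \sum_k G i k * G^T k j = dotr (g i) (g j).
  by rewrite dotrE; apply: eq_bigr => k _; rewrite !mxE.
have [<-|neq_ij] := eqVneq i j; first by rewrite mulr1n.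
by rewrite mulr0n gso_orth ?size_rows_of.
Qed.

Lemma gram_factor_gso : B *m B^T = L *m diag_mx (\row_i N i) *m L^T.
Proof.
by rewrite {1 2}gso_mx_factor trmx_mul !mulmxA -(mulmxA L) gso_mx_gram_diag.
Qed.

Lemma det_gram_gso : \det (B *m B^T) = \prod_(i < r) N i.
Proof.
have det_L : \det L = 1.
  rewrite det_trig; last by apply/is_trig_mxP => i j lt_ij; rewrite mxE ltnNge
    (ltnW lt_ij) -val_eqE /= (gtn_eqF lt_ij).
  by apply: big1 => i _; rewrite mxE ltnn eqxx.
rewrite gram_factor_gso !det_mulmx det_tr det_L mul1r mulr1 det_diag.
by apply: eq_bigr => i _; rewrite mxE.
Qed.

Lemma dotr_row_gso (i : 'I_r) :
  dotr (row i B) (row i B) = \sum_(k < i) mu i k ^+ 2 * N k + N i.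
Proof.
have -> : dotr (row i B) (row i B) = (B *m B^T) i i.
  by rewrite dotrE mxE; apply: eq_bigr => k _; rewrite !mxE.
rewrite gram_factor_gso mul_mx_diag mxE.
pose f k := (if (k < i)%N then mu i k else (k == i)%:R) ^+ 2 * N k.
have -> : \sum_(k < i) mu i k ^+ 2 * N k + N i = \sum_(k < i.+1) f k.
  rewrite big_ord_recr /= /f ltnn eqxx expr1n mul1r; congr (_ + _).
  by apply: eq_bigr => k _; rewrite ltn_ord.
rewrite (big_ord_widen r f (ltn_ord i)) [RHS]big_mkcond.
apply: eq_bigr => k _; rewrite !mxE /f ltnS.
case: (leqP k i) => [_|lt_ik]; first by rewrite mulrAC -expr2.
have neq_ki : k != i by rewrite -val_eqE /= gtn_eqF.
by rewrite (ltnNge k i) (ltnW lt_ik) (negbTE neq_ki) !mul0r.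
Qed.

End GramMatrix.

Section LLLBounds.
Variables (R : realType) (r m : nat) (M : 'M[int]_(r, m)).
Hypothesis lll_M : LLL_reduced R M.

Local Notation B := (map_mx (fun z : int => z%:~R : R) M).
Local Notation g i := (gso (rows_of B) i).
Local Notation N i := (dotr (g i) (g i)).
Local Notation mu i j := (gso_coef (rows_of B) i j).

Lemma lll_coef_sqr_le i j : (j < i < r)%N -> mu i j ^+ 2 <= 1 / 4.
Proof.
move=> lt_jir; have mu_le : `|mu i j| <= 1 / 2 := proj1 lll_M i j lt_jir.
by rewrite -real_normK ?num_real //; have := normr_ge0 (mu i j); nra.
Qed.

Lemma lll_gso_le_double i : (0 < i < r)%N -> N i.-1 <= 2 * N i.
Proof.
move=> lt_0ir; have lovasz : (3 / 4 - mu i i.-1 ^+ 2) * N i.-1 <= N i.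
  exact: proj2 lll_M i lt_0ir.
have mu_le : mu i i.-1 ^+ 2 <= 1 / 4.
  case/andP: lt_0ir => i_gt0 lt_ir.
  by apply: lll_coef_sqr_le; rewrite prednK ?leqnn.
by have := dotrr_ge0 (g i.-1); nra.
Qed.

(* [2^(i+1) - 2] is the geometric sum of the bounds [N_k <= 2^(i-k) N_i]. *)
Lemma lll_sum_gso_le i : (i < r)%N -> \sum_(k < i) N k <= (2 ^+ i.+1 - 2) * N i.
Proof.
elim: i => [|i IH] lt_ir; first by rewrite big_ord0 expr1 subrr mul0r.
have le_Ni : N i <= 2 * N i.+1 := lll_gso_le_double (i := i.+1) lt_ir.
have pow_ge1 : 1 <= (2 : R) ^+ i.+1 by rewrite exprn_ege1 // ler1n.
have := mulr_ge0 (x := 2 ^+ i.+1 - 1) (y := 2 * N i.+1 - N i).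
rewrite !subr_ge0 pow_ge1 le_Ni => /(_ isT isT) prod_ge0.
have := IH (ltnW lt_ir); rewrite big_ord_recr /= [2 ^+ i.+2]exprS; nra.
Qed.

Lemma lll_row_norm_le (i : 'I_r) : dotr (row i B) (row i B) <= 2 ^+ i * N i.
Proof.
have mu_sum_le : \sum_(k < i) mu i k ^+ 2 * N k <= (\sum_(k < i) N k) / 4.
  rewrite mulr_suml; apply: ler_sum => k _.
  rewrite mulrC ler_wpM2l ?dotrr_ge0 //.
  by rewrite -div1r; apply: lll_coef_sqr_le; rewrite !ltn_ord.
have := lll_sum_gso_le (ltn_ord i); rewrite exprS.
have pow_ge1 : 1 <= (2 : R) ^+ i by rewrite exprn_ege1 // ler1n.
by rewrite dotr_row_gso; have := dotrr_ge0 (g i); nra.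
Qed.

Lemma lll_prod_row_norm_le :
  \prod_(i < r) dotr (row i B) (row i B) <= 2 ^+ 'C(r, 2) * \det (B *m B^T).
Proof.
rewrite det_gram_gso -bin2_sum big_mkord -prodrXr -big_split /=.
by apply: ler_prod => i _; rewrite dotrr_ge0 lll_row_norm_le.
Qed.

End LLLBounds.

Section IntegerRows.
Variables (R : realType) (r m : nat) (M : 'M[int]_(r, m)).

Local Notation B := (map_mx (fun z : int => z%:~R : R) M).

Lemma intmx_entry_sqr_le_row_norm i j :
  (M i j)%:~R ^+ 2 <= dotr (row i B) (row i B).
Proof.
rewrite dotrE (bigD1 j) //= !mxE -expr2 lerDl.
by apply: sumr_ge0 => k _; rewrite !mxE -expr2 sqr_ge0.
Qed.

Lemma intmx_row_norm_ge1 i : row i M != 0 -> 1 <= dotr (row i B) (row i B).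
Proof.
move=> row_neq0; have [j Mij_neq0] : exists j, M i j != 0.
  apply/existsP; move: row_neq0; apply: contraNT => /existsPn Mi0.
  by apply/eqP/rowP => j; rewrite !mxE; apply/eqP/negbNE/Mi0.
apply: le_trans (intmx_entry_sqr_le_row_norm i j).
by rewrite sqr_intr_ge1 ?intr_int ?intr_eq0.
Qed.

Lemma intmx_entry_sqr_le_prod_row_norm i j :
  (forall k, row k M != 0) ->
  (M i j)%:~R ^+ 2 <= \prod_k dotr (row k B) (row k B).
Proof.
move=> rows_neq0; apply: le_trans (intmx_entry_sqr_le_row_norm i j) _.
rewrite (bigD1 i) //= ler_peMr ?dotrr_ge0 //.
apply: (big_ind (fun x => 1 <= x)) => // [x y|k _]; first exact: mulr_ege1.
exact: intmx_row_norm_ge1.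
Qed.

End IntegerRows.

Lemma mx_inf_norm_le (R : realType) r m (M : 'M[int]_(r, m)) (X : R) :
  0 <= X -> (forall i j, `|M i j|%:~R <= X) -> (mx_inf_norm M)%:~R <= X.
Proof.
move=> X_ge0 entry_le.
have max_le (x y : int) : x%:~R <= X -> y%:~R <= X -> (Num.max x y)%:~R <= X.
  by rewrite maxElt; case: ifP.
apply: (big_ind (fun z : int => z%:~R <= X)) => // i _.
by apply: (big_ind (fun z : int => z%:~R <= X)).
Qed.

Lemma intmx_free_row_neq0 r m (M : 'M[int]_(r, m)) :
  (forall c : 'rV[int]_r, c *m M = 0 -> c = 0) -> forall i, row i M != 0.
Proof.
move=> free_M i; apply/eqP; rewrite rowE => /free_M /rowP /(_ i).
by rewrite !mxE !eqxx.
Qed.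

Theorem lll_mx_inf_norm_le (R : realType) r m (M : 'M[int]_(r, m)) :
  LLL_reduced R M -> (forall c : 'rV[int]_r, c *m M = 0 -> c = 0) ->
  (mx_inf_norm M)%:~R <= Num.sqrt (2 ^+ 'C(r, 2)) * lattice_det R M.
Proof.
move=> lll_M free_M; rewrite /lattice_det -sqrtrM ?exprn_ge0 //.
apply: mx_inf_norm_le => [|i j]; first exact: sqrtr_ge0.
have entry_le := le_trans (intmx_entry_sqr_le_prod_row_norm R i j
  (intmx_free_row_neq0 free_M)) (lll_prod_row_norm_le lll_M).
by rewrite intr_norm -sqrtr_sqr ler_sqrt ?(le_trans (sqr_ge0 _) entry_le).
Qed.

Lemma powR2_bin2 (R : realType) r :
  powR 2 (r%:R * (r%:R - 1) / 4) = Num.sqrt (2 ^+ 'C(r, 2)) :> R.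
Proof.
have bin2E : 'C(r, 2)%:R * 2 = r%:R * (r%:R - 1) :> R.
  case: r => [|r]; first by rewrite bin0n !mul0r.
  rewrite -natrM mulnC -[2%N]/(1.+1) mul_bin_left bin1 subn1 /= natrM -natr1.
  lra.
have -> : r%:R * (r%:R - 1) / 4 = 'C(r, 2)%:R * 2^-1 :> R.
  by rewrite -bin2E; lra.
by rewrite powRrM powR_mulrn // powR12_sqrt // exprn_ge0.
Qed.

Theorem proposition2p2
  (R : realType) (F : fieldType) (k : {pred F}) (q : nat) (x : F) (n : nat)
  (s : nat) (S : 'I_s -> F -> int) (M : 'M[int]_(s.-1, s)) :
  is_subfield k -> has_card k q -> full_constant_field k ->
  transcendental_over k x -> ext_degree_kx k x n -> coprime n q ->
  (forall i, is_place k (S i)) -> injective S ->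
  (forall v, infinite_place k x v -> exists i, v = S i) ->
  is_lattice_basis (S_val_lattice k S) M ->
  LLL_reduced R M ->
  ((mx_inf_norm M)%:~R : R)
    <= powR 2 (((s%:R - 1) * (s%:R - 2)) / 4) * lattice_det R M.
Proof.
move=> _ _ _ _ _ _ _ _ _ [_ _ free_M] lll_M.
case: s => [|r] in S M free_M lll_M *.
  by rewrite /mx_inf_norm big_ord0 mulr_ge0 ?powR_ge0 ?sqrtr_ge0.
have -> : (r.+1%:R - 1) * (r.+1%:R - 2) = r%:R * (r%:R - 1) :> R.
  by rewrite -natr1; lra.
by rewrite powR2_bin2; apply: lll_mx_inf_norm_le.
Qed.
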